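(* Let $\Lambda$ and $\Lambda'$ be any permutation local limits. Then there exists a sequence of permutations $(\varphi_j)_{j\in\mathbb{N}}$ that converges locally to $\Lambda$ such that the sequence of inverse permutations $(\varphi_j^{-1})_{j\in\mathbb{N}}$ converges locally to $\Lambda'$.
   Context: Let $S$ be the set of all finite permutations. For $\pi\in S_k$ and $\sigma\in S_n$ with $k\le n$, the local density $\rho_k(\pi,\sigma)$ is the number of $i\in\{1,\dots,n-k+1\}$ such that $\sigma(i)\dots\sigma(i+k-1)$ is order-isomorphic to $\pi$, divided by $n-k+1$. A sequence $(\sigma_j)$ with $|\sigma_j|\to\infty$ converges locally to $\Lambda\in[0,1]^S$ if $\rho_{|\pi|}(\pi,\sigma_j)\to\Lambda_\pi$ for every $\pi\in S$. A permutation local limit is a vector $\Lambda\in[0,1]^S$ which is the local limit of some locally convergent sequence of permutations. $\varphi^{-1}$ denotes the inverse permutation. *)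

From Stdlib Require Import Reals.
From mathcomp Require Import all_boot fingroup perm.
Set Implicit Arguments. Unset Strict Implicit. Unset Printing Implicit Defensive.

Definition fperm := {n : nat & 'S_n}.
Definition fsize (s : fperm) : nat := projT1 s.

(* sigma viewed as a function on nat (0-based positions, values in 0..n-1). *)
Definition permval (n : nat) (s : 'S_n) (x : nat) : nat :=
  match @insub nat (fun y => y < n) 'I_n x with
  | Some i => nat_of_ord (s i)
  | None => 0
  end.

Definition occurs_at (k n : nat) (pi : 'S_k) (s : 'S_n) (i : nat) : bool :=
  [forall a : 'I_k, forall b : 'I_k,
     (permval s (i + a) < permval s (i + b)) == (pi a < pi b)].

Definition occ_count (k n : nat) (pi : 'S_k) (s : 'S_n) : nat :=
  \sum_(0 <= i < n - k + 1) (occurs_at pi s i : nat).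

(* Local density rho_k(pi, sigma); set to 0 when k > n (undefined there,
   irrelevant for limits since |sigma_j| -> oo). *)
Definition local_density (k n : nat) (pi : 'S_k) (s : 'S_n) : R :=
  if k <= n then Rdiv (INR (occ_count pi s)) (INR (n - k + 1)) else R0.

Definition fvec := forall k : nat, 'S_k -> R.

Definition converges_locally (sq : nat -> fperm) (L : fvec) : Prop :=
  (forall M : nat, exists J : nat, forall j : nat, (J <= j)%coq_nat -> M <= fsize (sq j)) /\
  (forall (k : nat) (pi : 'S_k),
      Un_cv (fun j => local_density pi (projT2 (sq j))) (L k pi)).

Definition in_unit_cube (L : fvec) : Prop :=
  forall (k : nat) (pi : 'S_k), Rle R0 (L k pi) /\ Rle (L k pi) R1.

Definition perm_local_limit (L : fvec) : Prop :=
  in_unit_cube L /\ exists sq : nat -> fperm, converges_locally sq L.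

Definition fperm_inv (s : fperm) : fperm := existT _ (projT1 s) ((projT2 s)^-1)%g.

(* Take sigma_j -> L and tau_j -> L' with sizes m_j, n_j.  The permutation
   phi_j of size m_j * n_j maps position b * m_j + x (b < n_j, x < m_j) to the
   value sigma_j(x) * n_j + tau_j^-1(b).  Thus phi_j is a concatenation of
   n_j blocks, each order-isomorphic to sigma_j, and its inverse maps
   c * n_j + d to tau_j^-1^-1(d) * m_j + sigma_j^-1(c), i.e. it is a
   concatenation of m_j blocks order-isomorphic to tau_j. *)
From Stdlib Require Import Reals Lra Lia.
From mathcomp Require Import all_boot fingroup perm.
From mathcomp Require Import zify.
Set Implicit Arguments. Unset Strict Implicit. Unset Printing Implicit Defensive.

Lemma permval_ord n (s : 'S_n) (i : 'I_n) : permval s i = s i.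
Proof. by rewrite /permval valK. Qed.

Lemma permval_lt n (s : 'S_n) x : x < n -> permval s x < n.
Proof. by move=> hx; rewrite (_ : x = Ordinal hx) // permval_ord. Qed.

Lemma permval_inj n (s : 'S_n) x y :
  x < n -> y < n -> permval s x = permval s y -> x = y.
Proof.
move=> hx hy; rewrite (_ : x = Ordinal hx) // (_ : y = Ordinal hy) // !permval_ord.
by move/val_inj/perm_inj => [].
Qed.

Lemma block_sum (F : nat -> nat) nb bs :
  \sum_(0 <= i < nb * bs) F i = \sum_(0 <= b < nb) \sum_(0 <= r < bs) F (b * bs + r).
Proof.
rewrite big_nat_mul; apply: eq_big_nat => b _.
rewrite mulSn addnC -{1}[b * bs]add0n big_addn addKn.
by apply: eq_big_nat => r _; rewrite addnC.
Qed.

Lemma leq_sum_nat m n (F G : nat -> nat) :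
  (forall i, m <= i < n -> F i <= G i) ->
  \sum_(m <= i < n) F i <= \sum_(m <= i < n) G i.
Proof.
move=> h; rewrite big_nat_cond [X in _ <= X]big_nat_cond.
by apply: leq_sum => i /andP [hi _]; exact: h.
Qed.

Lemma occ_count_le k n (pi : 'S_k) (s : 'S_n) : occ_count pi s <= n - k + 1.
Proof.
rewrite /occ_count; apply: (leq_trans (n := \sum_(0 <= i < n - k + 1) 1)).
  by apply: leq_sum => i _; case: occurs_at.
by rewrite sum_nat_const_nat subn0 muln1.
Qed.

Definition block_copy (N bs : nat) (psi : 'S_N) (sig : 'S_bs) (nb : nat) : Prop :=
  forall b x y, b < nb -> x < bs -> y < bs ->
    (permval psi (b * bs + x) < permval psi (b * bs + y)) =
    (permval sig x < permval sig y).

(* Values of the form sig(x) * nb + g(b) on block b give a block copy of sig: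
   the term g(b) < nb never affects comparisons inside a block. *)
Lemma block_copy_of_values N bs nb (psi : 'S_N) (sig : 'S_bs) (g : nat -> nat) :
  (forall b x, b < nb -> x < bs -> permval psi (b * bs + x) = permval sig x * nb + g b) ->
  block_copy psi sig nb.
Proof. by move=> H b x y hb hx hy; rewrite !H // ltn_add2r ltn_pmul2r //; lia. Qed.

Section BlockCount.
Variables (k N bs nb : nat) (pi : 'S_k) (psi : 'S_N) (sig : 'S_bs).
Hypotheses (k_gt0 : 0 < k) (k_le_bs : k <= bs) (nb_gt0 : 0 < nb).
Hypotheses (HN : N = nb * bs) (Hcopy : block_copy psi sig nb).

Let f i := (occurs_at pi psi i : nat).
Let W := bs - k + 1.
Let o := occ_count pi sig.

Lemma occurs_in_block b r : b < nb -> r + k <= bs ->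
  occurs_at pi psi (b * bs + r) = occurs_at pi sig r.
Proof.
move=> hb hr; apply: eq_forallb => a; apply: eq_forallb => c.
have := ltn_ord a; have := ltn_ord c => ha hc.
by rewrite -!addnA Hcopy //; lia.
Qed.

Lemma block_prefix_count b : b < nb -> \sum_(0 <= r < W) f (b * bs + r) = o.
Proof.
move=> hb; apply: eq_big_nat => r /andP [_ hr].
by rewrite /f occurs_in_block //; rewrite /W in hr; lia.
Qed.

(* Windows starting in block b: o of them inside, at most k - 1 straddling. *)
Lemma block_bounds b : b < nb -> o <= \sum_(0 <= r < bs) f (b * bs + r) <= o + k.
Proof.
move=> hb; rewrite (big_cat_nat (n := W)) /W //=; last by lia.
rewrite -/W block_prefix_count // leq_addr /= leq_add2l.
apply: (leq_trans (n := \sum_(W <= r < bs) 1)).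
  by apply: leq_sum => i _; rewrite /f; case: occurs_at.
by rewrite sum_nat_const_nat /W; lia.
Qed.

(* Global count: nb - 1 full blocks plus the W windows of the last block. *)
Lemma count_bounds : nb * o <= occ_count pi psi <= nb * (o + k).
Proof.
have [nb' enb] : exists nb', nb = nb'.+1 by exists nb.-1; lia.
have e : N - k + 1 = nb' * bs + W by rewrite HN enb /W; lia.
have last_block : \sum_(nb' * bs <= i < nb' * bs + W) f i = o.
  rewrite -{1}[nb' * bs]add0n big_addn addKn -(block_prefix_count (b := nb')); last by lia.
  by apply: eq_big_nat => r _; rewrite addnC.
rewrite /occ_count e (big_cat_nat (n := nb' * bs)) ?leq_addr //= -/f last_block block_sum.
set S := \sum_(0 <= b < nb') _.
have lo : nb' * o <= S.
  apply: (leq_trans (n := \sum_(0 <= b < nb') o)); first by rewrite sum_nat_const_nat subn0.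
  apply: leq_sum_nat => b /andP [_ hb].
  by have /andP[] := block_bounds (b := b) ltac:(lia).
have hi : S <= nb' * (o + k).
  apply: (leq_trans (n := \sum_(0 <= b < nb') (o + k))); last by rewrite sum_nat_const_nat subn0.
  apply: leq_sum_nat => b /andP [_ hb].
  by have /andP[] := block_bounds (b := b) ltac:(lia).
by move: lo hi; rewrite enb; lia.
Qed.
End BlockCount.

Section Product.
Variables (m n : nat) (s : 'S_m) (t : 'S_n).

Definition bval (p : nat) : nat := permval s (p %% m) * n + permval t (p %/ m).

Lemma bval_lt p : p < m * n -> bval p < m * n.
Proof.
move=> hp; have m0 : 0 < m by case: m hp.
have hq : p %/ m < n by rewrite ltn_divLR // mulnC.
have h1 := permval_lt s (ltn_pmod p m0); have h2 := permval_lt t hq.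
rewrite /bval; nia.
Qed.

(* Both digits of bval p in base n are recovered, so bval is injective. *)
Lemma bval_inj p q : p < m * n -> q < m * n -> bval p = bval q -> p = q.
Proof.
move=> hp hq; have m0 : 0 < m by case: m hp.
have n0 : 0 < n by case: n hp; rewrite ?muln0.
have hpq : p %/ m < n by rewrite ltn_divLR // mulnC.
have hqq : q %/ m < n by rewrite ltn_divLR // mulnC.
have c1 := permval_lt t hpq; have c2 := permval_lt t hqq.
rewrite /bval => e.
have ea : permval s (p %% m) = permval s (q %% m).
  have := congr1 (divn^~ n) e.
  by rewrite /= !divnMDl // (divn_small c1) (divn_small c2) !addn0.
have ec : permval t (p %/ m) = permval t (q %/ m).
  by have := congr1 (modn^~ n) e; rewrite /= !modnMDl (modn_small c1) (modn_small c2).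
move/(permval_inj (ltn_pmod _ m0) (ltn_pmod _ m0)): ea => ea.
move/(permval_inj hpq hqq): ec => ec.
by rewrite (divn_eq p m) (divn_eq q m) ea ec.
Qed.

Definition bfun (p : 'I_(m * n)) : 'I_(m * n) := insubd p (bval p).

Lemma bfunE p : val (bfun p) = bval p.
Proof. by rewrite val_insubd bval_lt. Qed.

Lemma bfun_inj : injective bfun.
Proof. by move=> p q /(congr1 val); rewrite !bfunE => /bval_inj e; apply/val_inj/e. Qed.

Definition bperm : 'S_(m * n) := perm bfun_inj.

Lemma bperm_val b x : b < n -> x < m ->
  permval bperm (b * m + x) = permval s x * n + permval t b.
Proof.
move=> hb hx; have hp : b * m + x < m * n by nia.
rewrite (_ : b * m + x = Ordinal hp) // permval_ord permE bfunE /= /bval.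
by rewrite modnMDl modn_small // divnMDl ?divn_small ?addn0 //; lia.
Qed.

Lemma bperm_inv_val c d : c < m -> d < n ->
  permval bperm^-1 (c * n + d) = permval t^-1 d * m + permval s^-1 c.
Proof.
move=> hc hd; have hv : c * n + d < m * n by nia.
have a1 := permval_lt s^-1 hc; have a2 := permval_lt t^-1 hd.
have hq : permval t^-1 d * m + permval s^-1 c < m * n by nia.
have e : bperm (Ordinal hq) = Ordinal hv.
  apply: val_inj; rewrite permE bfunE /= /bval.
  rewrite modnMDl modn_small // divnMDl ?divn_small ?addn0 //; last by lia.
  by rewrite (_ : c = Ordinal hc) // (_ : d = Ordinal hd) // !permval_ord !permKV.
by rewrite (_ : c * n + d = Ordinal hv) // permval_ord -e permK.
Qed.

Lemma bperm_block_copy : block_copy bperm s n.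
Proof. apply: (block_copy_of_values (g := permval t)) => b x hb hx; exact: bperm_val. Qed.

Lemma bperm_inv_block_copy : block_copy bperm^-1 t^-1 m.
Proof.
apply: (block_copy_of_values (g := permval s^-1)) => c d hc hd.
by rewrite bperm_inv_val.
Qed.
End Product.

Open Scope R_scope.

Lemma leR (m n : nat) : (m <= n)%N -> INR m <= INR n.
Proof. by move/leP/le_INR. Qed.

Lemma INR_sub1 (a k : nat) : (k <= a)%N -> INR (a - k + 1) = INR a - INR k + 1.
Proof. by move=> h; rewrite plus_INR minus_INR /=; [lra | exact/leP]. Qed.

Lemma ratio_gap (A o D W nb k bs : R) :
  1 <= k -> 2 * k <= bs -> 1 <= nb -> 1 <= W ->
  W = bs - k + 1 -> D = nb * bs - k + 1 ->
  nb * o <= A -> A <= nb * (o + k) -> 0 <= o -> o <= W ->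
  Rabs (A / D - o / W) <= 2 * k / bs.
Proof.
move=> k1 kb nb1 W1 eW eD h1 h2 o0 oW.
have hD : nb * bs <= 2 * D by rewrite eD; nra.
have D0 : 0 < D by nra.
have e : A / D - o / W = (A * W - o * D) / (D * W) by field; lra.
have hn1 : A * W - o * D <= nb * k * W.
  have := Rmult_le_compat_r W _ _ ltac:(lra) h2.
  have : 0 <= o * ((nb - 1) * (k - 1)) by apply: Rmult_le_pos => //; apply: Rmult_le_pos; lra.
  subst W D; nra.
have hn2 : - (nb * k * W) <= A * W - o * D.
  have := Rmult_le_compat_r W _ _ ltac:(lra) h1.
  have : o * ((nb - 1) * (k - 1)) <= W * (nb * k).
    by apply: Rmult_le_compat => //; [apply: Rmult_le_pos; lra | nra].
  subst W D; nra.
have key : nb * k * W / (D * W) <= 2 * k / bs.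
  apply: (Rmult_le_reg_r (D * W * bs)); first by apply: Rmult_lt_0_compat; nra.
  have -> : nb * k * W / (D * W) * (D * W * bs) = nb * k * W * bs by field; lra.
  have -> : 2 * k / bs * (D * W * bs) = 2 * k * D * W by field; lra.
  nra.
rewrite e /Rdiv Rabs_mult Rabs_inv (Rabs_right (D * W)); last by nra.
apply: Rle_trans key; apply: Rmult_le_compat_r.
  by apply: Rlt_le; apply: Rinv_0_lt_compat; nra.
by apply: Rabs_le; lra.
Qed.

Lemma block_copy_density k N bs nb (pi : 'S_k) (psi : 'S_N) (sig : 'S_bs) :
  (0 < k)%N -> (2 * k <= bs)%N -> (0 < nb)%N -> N = (nb * bs)%N ->
  block_copy psi sig nb ->
  Rabs (local_density pi psi - local_density pi sig) <= 2 * INR k / INR bs.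
Proof.
move=> k0 kb nb0 HN Hcopy; have kbs : (k <= bs)%N by lia.
have /andP [c1 c2] := count_bounds pi k0 kbs nb0 HN Hcopy.
rewrite /local_density kbs (_ : (k <= N)%N); last by rewrite HN; nia.
apply: (ratio_gap (nb := INR nb) (k := INR k) (bs := INR bs)).
- exact: (leR (m := 1)).
- by rewrite (_ : 2 = INR 2) -?mult_INR; [apply: leR | simpl; lra].
- exact: (leR (m := 1)).
- by apply: (leR (m := 1)); lia.
- exact: INR_sub1.
- by rewrite INR_sub1 ?HN ?mult_INR //; nia.
- by rewrite -mult_INR; apply: leR.
- by rewrite -plus_INR -mult_INR; apply: leR.
- exact: pos_INR.
- by apply: leR; apply: occ_count_le.
Qed.

(* The empty pattern occurs in every window, so its density is always 1. *)
Lemma density_empty_pattern (pi : 'S_0) N (psi : 'S_N) : local_density pi psi = 1.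
Proof.
rewrite /local_density /= /occ_count.
rewrite (eq_big_nat _ _ (F2 := fun=> 1%N)); last first.
  by move=> i _; rewrite (_ : occurs_at _ _ _ = true) //; apply/forallP => -[].
by rewrite sum_nat_const_nat subn0 muln1 /Rdiv Rinv_r // subn0 addn1; apply: not_0_INR.
Qed.

Lemma Un_cv_close (u v : nat -> R) (sz : nat -> nat) (l c : R) : 0 <= c ->
  Un_cv u l ->
  (forall M, exists J, forall j, (J <= j)%coq_nat -> (M <= sz j)%N) ->
  (exists J, forall j, (J <= j)%coq_nat -> Rabs (v j - u j) <= c / INR (sz j)) ->
  Un_cv v l.
Proof.
move=> c0 Hu Hsz [J3 H3] eps he.
have [N1 H1] := Hu (eps / 2) ltac:(lra).
have [n0 Hn0] := INR_archimed (eps / 2) c ltac:(lra).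
have [J2 H2] := Hsz n0.+1.
exists (Nat.max N1 (Nat.max J2 J3)) => j hj.
have hs := H2 j ltac:(lia); have hv := H3 j ltac:(lia); have hu := H1 j ltac:(lia).
have hs' : INR n0 + 1 <= INR (sz j) by rewrite -S_INR; apply: leR.
have s0 : 0 < INR (sz j) by have := pos_INR n0; lra.
have hc : c / INR (sz j) <= eps / 2.
  apply: (Rmult_le_reg_r (INR (sz j))) => //.
  rewrite /Rdiv Rmult_assoc Rinv_l; last by lra.
  have := pos_INR n0; nra.
rewrite /R_dist in hu *.
have := Rabs_triang (v j - u j) (u j - l).
by rewrite (_ : v j - u j + (u j - l) = v j - l); [lra | ring].
Qed.

(* Eventual block copies of a locally convergent sequence converge locally to
   the same limit: the window effects at block borders are O(k / |sq j|). *)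
Lemma converges_locally_block_copy (sq ps : nat -> fperm) (nb : nat -> nat) (L : fvec) :
  converges_locally sq L ->
  (exists J, forall j, (J <= j)%coq_nat ->
     (0 < nb j)%N /\ fsize (ps j) = (nb j * fsize (sq j))%N /\
     block_copy (projT2 (ps j)) (projT2 (sq j)) (nb j)) ->
  converges_locally ps L.
Proof.
move=> [Hsize Hdens] [J Hps]; split.
  move=> M; have [J1 H1] := Hsize M; exists (Nat.max J J1) => j hj.
  have [nb0 [-> _]] := Hps j ltac:(lia); have := H1 j ltac:(lia); nia.
case=> [|k] pi.
  by apply: (Un_cv_ext _ _ _ _ (Hdens 0%N pi)) => j; rewrite !density_empty_pattern.
apply: (Un_cv_close (sz := fun j => fsize (sq j)) (c := 2 * INR k.+1) _ (Hdens _ pi) Hsize).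
  by have := pos_INR k.+1; lra.
have [J1 H1] := Hsize (2 * k.+1)%N; exists (Nat.max J J1) => j hj.
have [nb0 [eN Hcopy]] := Hps j ltac:(lia).
by apply: (block_copy_density pi _ (H1 j ltac:(lia)) nb0 eN Hcopy).
Qed.

Theorem mainTheorem11 (L L' : fvec) :
  perm_local_limit L -> perm_local_limit L' ->
  exists phi : nat -> fperm,
    converges_locally phi L /\ converges_locally (fun j => fperm_inv (phi j)) L'.
Proof.
move=> [_ [sq Hsq]] [_ [sq' Hsq']].
pose sig j := projT2 (sq j); pose tau j := projT2 (sq' j).
exists (fun j => existT (fun n => 'S_n) _ (bperm (sig j) (tau j)^-1)); split.
- apply: (converges_locally_block_copy (nb := fun j => fsize (sq' j)) Hsq).
  have [J HJ] := Hsq'.1 1%N; exists J => j hj.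
  by split; [exact: HJ | split; [exact: mulnC | exact: bperm_block_copy]].
- apply: (converges_locally_block_copy (nb := fun j => fsize (sq j)) Hsq').
  have [J HJ] := Hsq.1 1%N; exists J => j hj.
  split; [exact: HJ | split => //].
  by rewrite -[projT2 (sq' j)]invgK; exact: bperm_inv_block_copy.
Qed.
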